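(* Let $A\in\mathbb{R}^{m\times n}$ with $A\geq 0$ and $A^{\dagger}\geq 0$, and let $(U_k^{(i)},V_k^{(i)},E_k)_{k=1}^{p}$, $i=1,2$, be two proper weak regular multisplittings of $A$ (with the same weighting matrices $E_k$) such that $R(E_k)\subseteq R(A^{T})$ for each $k=1,\ldots,p$. If $[U_k^{(1)}]^{\dagger}\geq[U_k^{(2)}]^{\dagger}$ for each $k=1,\ldots,p$, then $\rho(H_1)\leq\rho(H_2)<1$, where $H_i=\sum_{k=1}^{p}E_k[U_k^{(i)}]^{\dagger}V_k^{(i)}$ for $i=1,2$.
   Context: $A^{\dagger}$ denotes the Moore–Penrose inverse, $\rho(\cdot)$ the spectral radius, $R(\cdot)$, $N(\cdot)$ range and null space; inequalities are entrywise. A splitting $A=U-V$ is proper if $R(U)=R(A)$ and $N(U)=N(A)$; a proper splitting is proper weak regular if $U^{\dagger}\geq 0$ and $U^{\dagger}V\geq 0$. A proper weak regular multisplitting of $A$ is a triplet $(U_k,V_k,E_k)_{k=1}^{p}$ where each $A=U_k-V_k$ is a proper weak regular splitting and each $E_k\geq 0$ is an $n\times n$ diagonal matrix with $\sum_{k=1}^{p}E_k=I_n$. *)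

From HB Require Import structures.
From mathcomp Require Import all_boot all_order all_algebra.
From mathcomp Require complex. Import complex.ComplexField.
From mathcomp Require Import boolp classical_sets reals.
Set Implicit Arguments. Unset Strict Implicit. Unset Printing Implicit Defensive.
Import Order.TTheory GRing.Theory Num.Theory.
Local Open Scope ring_scope.
Local Open Scope classical_set_scope.

Section Defs.
Variable R : realType.

Definition mx_nonneg m n (A : 'M[R]_(m, n)) : Prop := forall i j, 0 <= A i j.
Definition mx_ge m n (A B : 'M[R]_(m, n)) : Prop := forall i j, B i j <= A i j.

(* X is the Moore-Penrose inverse of A (the four Penrose equations; it is unique) *)
Definition is_MP_inverse m n (A : 'M[R]_(m, n)) (X : 'M[R]_(n, m)) : Prop :=
  [/\ A *m X *m A = A, X *m A *m X = X,
      (A *m X)^T = A *m X & (X *m A)^T = X *m A].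

Definition mx_range m n (A : 'M[R]_(m, n)) : set 'cV[R]_m :=
  [set y | exists x : 'cV[R]_n, y = A *m x].
Definition mx_null m n (A : 'M[R]_(m, n)) : set 'cV[R]_n :=
  [set x | A *m x = 0].

Definition proper_splitting m n (A U V : 'M[R]_(m, n)) : Prop :=
  [/\ A = U - V, mx_range U = mx_range A & mx_null U = mx_null A].

Definition proper_weak_regular m n (A U V : 'M[R]_(m, n)) (Ud : 'M[R]_(n, m)) : Prop :=
  [/\ proper_splitting A U V, is_MP_inverse U Ud, mx_nonneg Ud & mx_nonneg (Ud *m V)].

Definition is_diag_nonneg n (E : 'M[R]_n) : Prop :=
  (forall i j, i != j -> E i j = 0) /\ mx_nonneg E.

Definition pwr_multisplitting m n p (A : 'M[R]_(m, n))
  (U V : 'I_p -> 'M[R]_(m, n)) (Ud : 'I_p -> 'M[R]_(n, m)) (E : 'I_p -> 'M[R]_n) : Prop :=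
  [/\ forall k, proper_weak_regular A (U k) (V k) (Ud k),
      forall k, is_diag_nonneg (E k) & \sum_(k < p) E k = 1%:M].

Definition spectral_radius n (H : 'M[R]_n) : R :=
  sup [set complex.ComplexField.Normc.normc z | z in [set z : complex.complex R |
        eigenvalue (map_mx (fun x : R => complex.real_complex R x) H : 'M[complex.complex R]_n) z]].

Definition multisplit_iter m n p (U V : 'I_p -> 'M[R]_(m, n))
  (Ud : 'I_p -> 'M[R]_(n, m)) (E : 'I_p -> 'M[R]_n) : 'M[R]_n :=
  \sum_(k < p) E k *m (Ud k *m V k).
End Defs.

From HB Require Import structures.
From mathcomp Require Import all_boot all_order all_algebra.
From mathcomp Require complex.
From mathcomp Require Import boolp classical_sets reals.
Import Order.TTheory GRing.Theory Num.Theory.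
Import complex complex.ComplexField complex.ComplexField.Normc.
Set Implicit Arguments. Unset Strict Implicit. Unset Printing Implicit Defensive.
Local Open Scope ring_scope.
Local Open Scope classical_set_scope.

(* A^† A is the orthogonal projector onto R(A^T), so R(E_k) ⊆ R(A^T) and
   Σ_k E_k = I give A^† A = I; then N(U_k) = N(A) = 0 gives U_k^† U_k = I and
   H_i = I - M_i A with M_i = Σ_k E_k [U_k^(i)]^†.  Since M_1 ≥ M_2 ≥ 0 and
   A ≥ 0 we get 0 ≤ H_1 ≤ H_2, and ρ is monotone on nonnegative matrices.
   Moreover [U_k^(2)]^† A A^† = [U_k^(2)]^† gives H_2 A^† = A^† - M_2, so
   (Σ_{j<k} H_2^j) M_2 = A^† - H_2^k A^† ≤ A^† stays bounded.  If w is a left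
   eigenvector of H_2 for |λ| ≥ 1, then x = |w| satisfies x H_2^j ≥ x for all
   j, which forces x M_2 = 0 and hence x = 0: so ρ(H_2) < 1.

   Monotonicity is also proved through x = |w|: if x ≥ 0, x ≠ 0 and
   x G ≥ r x with r > ρ(G), all eigenvalues of G/r lie in the open unit disc,
   so x (G/r)^k → 0 (by Cayley–Hamilton, removing one factor G/r - z at a
   time), contradicting x (G/r)^k ≥ x. *)

Lemma char_poly_split (F : closedFieldType) n (M : 'M[F]_n) :
  exists zs : seq F, char_poly M = \prod_(z <- zs) ('X - z%:P).
Proof.
have [zs charE] := closed_field_poly_normal (char_poly M).
by exists zs; rewrite charE (monicP (char_poly_monic _)) scale1r.
Qed.

Lemma eigenvalue_seq (F : closedFieldType) n (M : 'M[F]_n) :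
  exists zs : seq F, forall z, eigenvalue M z = (z \in zs).
Proof.
have [zs charE] := char_poly_split M.
by exists zs => z; rewrite eigenvalue_root_char charE root_prod_XsubC.
Qed.

Lemma map_mx_mul_exp (aR rR : pzRingType) (f : {rmorphism aR -> rR}) n
  (x : 'rV[aR]_n) (G : 'M[aR]_n) k :
  map_mx f (x *m G ^+ k) = map_mx f x *m map_mx f G ^+ k.
Proof.
elim: k => [|k IHk]; first by rewrite !expr0 !mulmx1.
by rewrite !exprSr -[_ * G]/(_ *m G) -[_ * map_mx f G]/(_ *m _) !mulmxA map_mxM IHk.
Qed.

Section Vanishing.
Variable R : archiRealFieldType.

(* Only an upper bound: for nonnegative [u] this is convergence to 0. *)
Definition vanishing (u : nat -> R) : Prop :=
  forall e, 0 < e -> exists N, forall k, (N <= k)%N -> u k <= e.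

Lemma Bernoulli_ineq (h : R) k : 0 <= h -> 1 + k%:R * h <= (1 + h) ^+ k.
Proof.
move=> h0; elim: k => [|k IHk]; first by rewrite mul0r addr0 expr0.
rewrite exprSr (le_trans _ (ler_wpM2r _ IHk)) ?addr_ge0 //.
rewrite mulrDl mul1r mulrDr mulr1 -natr1 mulrDl mul1r addrA.
by rewrite addrAC lerD2l lerDl !mulr_ge0.
Qed.

Lemma vanishing_geometric (q K : R) :
  0 <= q -> q < 1 -> vanishing (fun k => q ^+ k * K).
Proof.
move=> q0 q1 e e0.
have [K0|K0] := lerP K 0.
  by exists 0%N => k _; rewrite (le_trans _ (ltW e0)) // mulr_ge0_le0 ?exprn_ge0.
have [->|qn0] := eqVneq q 0.
  by exists 1%N => -[|k] // _; rewrite expr0n mul0r ltW.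
have q_gt0 : 0 < q by rewrite lt_def qn0.
pose h := q^-1 - 1.
have h_gt0 : 0 < h by rewrite subr_gt0 invf_gt1.
have qE : q = (1 + h)^-1 by rewrite addrC subrK invrK.
have b0 : 0 <= K / (e * h) by rewrite divr_ge0 ?ltW ?mulr_gt0.
exists (Num.bound (K / (e * h))) => k Nk.
have Kk : K < e * (k%:R * h).
  rewrite mulrCA -ltr_pdivrMr ?mulr_gt0 // (lt_le_trans (archi_boundP b0)) //.
  by rewrite ler_nat.
rewrite qE exprVn mulrC ler_pdivrMr ?exprn_gt0 ?ltr_wpDr ?ltW //.
apply: (lt_le_trans Kk); apply: ler_wpM2l; first exact: ltW.
by rewrite (le_trans _ (Bernoulli_ineq k (ltW h_gt0))) // lerDr.
Qed.

Lemma vanishing_contraction (b c : nat -> R) (q : R) :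
  0 <= q -> q < 1 -> vanishing c -> (forall k, b k.+1 <= q * b k + c k) ->
  vanishing b.
Proof.
move=> q0 q1 c_van b_rec e e0.
pose d := e / 2.
have d0 : 0 < d by rewrite divr_gt0.
have [N cN] : exists N, forall k, (N <= k)%N -> c k <= d * (1 - q).
  by apply: c_van; rewrite mulr_gt0 // subr_gt0.
have shift j : b (N + j)%N - d <= q ^+ j * (b N - d).
  elim: j => [|j IHj]; first by rewrite addn0 expr0 mul1r.
  rewrite addnS exprS -mulrA.
  apply: le_trans (ler_wpM2l q0 IHj).
  rewrite lerBlDr (le_trans (b_rec _)) // mulrBr -addrA lerD2l.
  by rewrite (le_trans (cN _ (leq_addr _ _))) // mulrBr mulr1 [d * q]mulrC addrC.
have [J geoJ] := vanishing_geometric (b N - d) q0 q1 d0.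
exists (N + J)%N => k NJk.
have Nk : (N <= k)%N := leq_trans (leq_addr _ _) NJk.
rewrite -(subnKC Nk) (splitr e) -/d -lerBlDr (le_trans (shift _)) // geoJ //.
by rewrite leq_subRL // addnC.
Qed.

End Vanishing.

Section ComplexOrbits.
Variable R : realType.
Local Notation C := (complex.complex R).

Lemma normc_ge0 (z : C) : 0 <= normc z.
Proof. by case: z => a b; rewrite sqrtr_ge0. Qed.

Lemma normc_real (t : R) : normc (real_complex R t) = `|t|.
Proof. by rewrite /normc /= expr0n /= addr0 sqrtr_sqr. Qed.

Lemma vanishing_normc_contraction (a : nat -> C) (z : C) : normc z < 1 ->
  vanishing (fun k => normc (a k.+1 - z * a k)) -> vanishing (fun k => normc (a k)).
Proof.
move=> z1 /(vanishing_contraction (normc_ge0 z) z1); apply=> k.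
by rewrite -normcM (le_trans _ (le_normcD _ _)) // addrC subrK.
Qed.

Definition orbit_vanishing n (M : 'M[C]_n) (x : 'rV[C]_n) : Prop :=
  forall j, vanishing (fun k => normc ((x *m M ^+ k) 0 j)).

Lemma orbit_vanishing0 n (M : 'M[C]_n) : orbit_vanishing M 0.
Proof. by move=> j e e0; exists 0%N => k _; rewrite mul0mx mxE normc0 ltW. Qed.

Lemma orbit_vanishing_factor n (M : 'M[C]_n) (x : 'rV_n) z : normc z < 1 ->
  orbit_vanishing M (x *m (M - z%:M)) -> orbit_vanishing M x.
Proof.
move=> z1 van j; apply: (vanishing_normc_contraction z1).
suff orbitE k : (x *m M ^+ k.+1) 0 j - z * (x *m M ^+ k) 0 j =
                (x *m (M - z%:M) *m M ^+ k) 0 j.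
  by under eq_fun do rewrite orbitE; apply: van.
rewrite -mulmxA mulmxBl mul_scalar_mx mulmxBr -scalemxAr -[M *m _]/(M * _) -exprS.
by rewrite !mxE.
Qed.

Lemma orbit_vanishing_prod n (M : 'M[C]_n) (x : 'rV_n) (zs : seq C) :
  (forall z, z \in zs -> normc z < 1) ->
  orbit_vanishing M (x *m \prod_(z <- zs) (M - z%:M)) -> orbit_vanishing M x.
Proof.
elim: zs x => [|z zs IHzs] x zs1; first by rewrite big_nil mulmx1.
rewrite big_cons -[_ * _]/(_ *m _) mulmxA => van.
apply: (orbit_vanishing_factor (zs1 z (mem_head _ _))).
by apply: IHzs van => w w_zs; apply: zs1; rewrite inE w_zs orbT.
Qed.

Lemma orbit_vanishing_eigen n (M : 'M[C]_n) (x : 'rV_n) :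
  (forall z, eigenvalue M z -> normc z < 1) -> orbit_vanishing M x.
Proof.
case: n M x => [|n] M x M1; first by move=> [].
have [zs charE] := char_poly_split M.
apply: (orbit_vanishing_prod (zs := zs)).
  by move=> z zs_z; apply: M1; rewrite eigenvalue_root_char charE root_prod_XsubC.
suff -> : \prod_(z <- zs) (M - z%:M) = 0 by rewrite mulmx0; apply: orbit_vanishing0.
rewrite -(Cayley_Hamilton M) charE rmorph_prod; apply: eq_bigr => z _.
by rewrite rmorphB /= horner_mx_X horner_mx_C.
Qed.

End ComplexOrbits.

Section SpectralRadius.
Variable R : realType.
Local Notation mxC H := (map_mx (fun x : R => complex.real_complex R x) H).

Lemma spectral_radius_le n (H : 'M[R]_n) b : 0 <= b ->
  (forall z, eigenvalue (mxC H) z -> normc z <= b) -> spectral_radius H <= b.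
Proof.
move=> b0 Hb; rewrite /spectral_radius.
have [[r Sr]|no_eig] := pselect (exists r, [set normc z | z in
    [set z | eigenvalue (mxC H) z]] r).
  by apply: ge_sup => [|_ [w Hw <-]]; [exists r | exact: Hb].
by rewrite sup_out // => -[[r Hr] _]; apply: no_eig; exists r.
Qed.

Lemma normc_le_spectral_radius n (H : 'M[R]_n) z :
  eigenvalue (mxC H) z -> normc z <= spectral_radius H.
Proof.
move=> Hz; have [zs eigE] := eigenvalue_seq (mxC H).
apply: ub_le_sup; last by exists z.
exists (\big[Num.max/0]_(w <- zs) normc w) => _ [w Hw <-].
by apply: le_bigmax_seq => //; rewrite -eigE.
Qed.

Lemma spectral_radius_ge0 n (H : 'M[R]_n) : 0 <= spectral_radius H.
Proof.
rewrite /spectral_radius.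
have [[_ [z Hz _]]|no_eig] := pselect (exists r, [set normc z | z in
    [set z | eigenvalue (mxC H) z]] r).
  exact: le_trans (normc_ge0 z) (normc_le_spectral_radius Hz).
by rewrite sup_out // => -[[r Hr] _]; apply: no_eig; exists r.
Qed.

Lemma spectral_radius_lt n (H : 'M[R]_n) c : 0 < c ->
  (forall z, eigenvalue (mxC H) z -> normc z < c) -> spectral_radius H < c.
Proof.
move=> c0 Hc; have [zs eigE] := eigenvalue_seq (mxC H).
have zs_ub z : eigenvalue (mxC H) z -> normc z <= \big[Num.max/0]_(w <- zs) normc w.
  by rewrite eigE => zs_z; apply: le_bigmax_seq.
apply: le_lt_trans (spectral_radius_le (bigmax_ge_id _ _ _ _) zs_ub) _.
by rewrite big_seq; apply: bigmax_lt => // z zs_z; apply: Hc; rewrite eigE.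
Qed.

Lemma spectral_radius_gt n (H : 'M[R]_n) t : 0 <= t -> t < spectral_radius H ->
  exists2 z, eigenvalue (mxC H) z & t < normc z.
Proof.
move=> t0; apply: contraPP => no_eig; apply/negP; rewrite -leNgt.
apply: spectral_radius_le t0 _ => z Hz; rewrite leNgt; apply/negP => tz.
by apply: no_eig; exists z.
Qed.

End SpectralRadius.

Section NonnegativeMatrices.
Variable R : realType.

Lemma mx_nonneg_mul m n p (A : 'M[R]_(m, n)) (B : 'M_(n, p)) :
  mx_nonneg A -> mx_nonneg B -> mx_nonneg (A *m B).
Proof. by move=> A0 B0 i j; rewrite mxE sumr_ge0 // => k _; rewrite mulr_ge0. Qed.

Lemma mx_nonneg_sum m n p (F : 'I_p -> 'M[R]_(m, n)) :
  (forall k, mx_nonneg (F k)) -> mx_nonneg (\sum_k F k).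
Proof. by move=> F0 i j; rewrite summxE sumr_ge0 // => k _; apply: F0. Qed.

Lemma mx_nonneg_exp n (H : 'M[R]_n) k : mx_nonneg H -> mx_nonneg (H ^+ k).
Proof.
move=> H0; elim: k => [|k IHk]; first by move=> i j; rewrite expr0 mxE ler0n.
by rewrite exprSr; apply: mx_nonneg_mul.
Qed.

Lemma mx_ge_sum m n p (F G : 'I_p -> 'M[R]_(m, n)) :
  (forall k, mx_ge (G k) (F k)) -> mx_ge (\sum_k G k) (\sum_k F k).
Proof. by move=> FG i j; rewrite !summxE ler_sum // => k _; apply: FG. Qed.

Lemma mx_ge_subr m n (X Y Z : 'M[R]_(m, n)) : mx_ge Y X -> mx_ge (Z - X) (Z - Y).
Proof. by move=> XY i j; rewrite !mxE lerD2l lerN2. Qed.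

Lemma mx_ge_mulr m n p (X Y : 'M[R]_(m, n)) (B : 'M_(n, p)) :
  mx_ge Y X -> mx_nonneg B -> mx_ge (Y *m B) (X *m B).
Proof. by move=> XY B0 i j; rewrite !mxE ler_sum // => k _; rewrite ler_wpM2r. Qed.

Lemma mx_ge_mull m n p (A : 'M[R]_(m, n)) (X Y : 'M_(n, p)) :
  mx_nonneg A -> mx_ge Y X -> mx_ge (A *m Y) (A *m X).
Proof. by move=> A0 XY i j; rewrite !mxE ler_sum // => k _; rewrite ler_wpM2l. Qed.

Lemma subinvariant_mul_exp n (G : 'M[R]_n) (x : 'rV_n) k :
  mx_nonneg G -> mx_ge (x *m G) x -> mx_ge (x *m G ^+ k) x.
Proof.
move=> G0 xG; elim: k => [|k IHk] i j; first by rewrite expr0 mulmx1.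
rewrite exprSr -[_ * G]/(_ *m G) mulmxA.
exact: le_trans (xG i j) (mx_ge_mulr IHk G0 i j).
Qed.

Lemma mx_nonneg_row_gt0 n (x : 'rV[R]_n) :
  mx_nonneg x -> x != 0 -> exists j, 0 < x 0 j.
Proof.
move=> x0 /eqP xn0; apply: contra_notP xn0 => no_pos.
apply/rowP => j; rewrite mxE; apply/eqP; rewrite eq_le x0 andbT leNgt.
by apply/negP => xj; apply: no_pos; exists j.
Qed.

Lemma mulmx_sum_nonneg_eq0 m n p (E : 'I_p -> 'M[R]_n) (F : 'I_p -> 'M[R]_(n, m))
  (G : 'I_p -> 'M[R]_(m, n)) (x : 'rV_n) :
  (forall k, mx_nonneg (E k)) -> (forall k, mx_nonneg (F k)) ->
  (forall k, F k *m G k = 1%:M) -> \sum_k E k = 1%:M ->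
  mx_nonneg x -> x *m (\sum_k E k *m F k) = 0 -> x = 0.
Proof.
move=> E0 F0 FG sumE x0 xEF.
have xEF0 k : x *m E k *m F k = 0.
  apply/rowP => j; rewrite [RHS]mxE -mulmxA.
  have sum0 : \sum_l (x *m (E l *m F l)) 0 j = 0.
    by rewrite -summxE -mulmx_sumr xEF mxE.
  apply: (psumr_eq0P _ sum0) => // l _.
  exact: mx_nonneg_mul x0 (mx_nonneg_mul (E0 l) (F0 l)) 0 j.
rewrite -[x]mulmx1 -sumE mulmx_sumr big1 // => k _.
by rewrite -[x *m E k]mulmx1 -(FG k) mulmxA xEF0 mul0mx.
Qed.

Lemma mulmx_geometric_sum n m (H : 'M[R]_n) (B M : 'M[R]_(n, m)) k :
  H *m B = B - M -> (\sum_(j < k) H ^+ j) *m M = B - H ^+ k *m B.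
Proof.
move=> HB; elim: k => [|k IHk]; first by rewrite big_ord0 mul0mx expr0 mul1mx subrr.
rewrite big_ord_recr /= mulmxDl IHk exprSr -[_ * H]/(_ *m H) -mulmxA HB mulmxBr.
by rewrite opprB addrA addrAC.
Qed.

Lemma subinvariant_mulmx_eq0 n m (H : 'M[R]_n) (B M : 'M[R]_(n, m)) (x : 'rV_n) :
  mx_nonneg H -> mx_nonneg B -> mx_nonneg M -> H *m B = B - M ->
  mx_nonneg x -> mx_ge (x *m H) x -> x *m M = 0.
Proof.
move=> H0 B0 M0 HB x0 xH; apply/rowP => j; rewrite [RHS]mxE; apply/eqP.
rewrite eq_le (mx_nonneg_mul x0 M0) andbT.
have bounded k : k%:R * (x *m M) 0 j <= (x *m B) 0 j.
  apply: le_trans (_ : (x *m (\sum_(i < k) H ^+ i) *m M) 0 j <= _).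
    rewrite -[k in k%:R]card_ord -sumr_const mulr_suml mulmx_sumr mulmx_suml summxE.
    apply: ler_sum => i _; rewrite mul1r.
    exact: (mx_ge_mulr (subinvariant_mul_exp i H0 xH) M0).
  rewrite -mulmxA (mulmx_geometric_sum _ HB) mulmxBr mxE gerDl mxE oppr_le0 mulmxA.
  exact: mx_nonneg_mul (mx_nonneg_mul x0 (mx_nonneg_exp k H0)) B0 0 j.
rewrite leNgt; apply/negP => xM_gt0.
have bound0 : 0 <= (x *m B) 0 j / (x *m M) 0 j.
  by rewrite divr_ge0 ?(ltW xM_gt0) ?(mx_nonneg_mul x0 B0).
have := bounded (Num.bound ((x *m B) 0 j / (x *m M) 0 j)).
by rewrite -ler_pdivlMr // leNgt archi_boundP.
Qed.

End NonnegativeMatrices.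

Section NonnegativeSpectralRadius.
Variable R : realType.
Local Notation C := (complex.complex R).
Local Notation mxC H := (map_mx (fun x : R => complex.real_complex R x) H).

Definition row_normc n (w : 'rV[C]_n) : 'rV[R]_n := \row_j normc (w 0 j).

Lemma row_normc_nonneg n (w : 'rV[C]_n) : mx_nonneg (row_normc w).
Proof. by move=> i j; rewrite mxE normc_ge0. Qed.

Lemma row_normc_eq0 n (w : 'rV[C]_n) : row_normc w = 0 -> w = 0.
Proof.
move/rowP=> w0; apply/rowP => j; rewrite mxE; apply: eq0_normc.
by have := w0 j; rewrite !mxE.
Qed.

Lemma mx_ge_row_normc_eigen n (H : 'M[R]_n) (l : C) (w : 'rV[C]_n) :
  mx_nonneg H -> w *m mxC H = l *: w ->
  mx_ge (row_normc w *m H) (normc l *: row_normc w).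
Proof.
move=> H0 wH i j; rewrite (ord1 i) !mxE -normcM.
have -> : l * w 0 j = (w *m mxC H) 0 j by rewrite wH mxE.
rewrite mxE; apply: (big_ind2 (fun a b => normc a <= b)) => [|a1 b1 a2 b2 ab1 ab2|k _].
- by rewrite normc0.
- exact: le_trans (le_normcD _ _) (lerD ab1 ab2).
- by rewrite !mxE normcM normc_real ger0_norm.
Qed.

Lemma spectral_radius_ge_subeigen n (G : 'M[R]_n) (x : 'rV_n) r :
  mx_nonneg G -> mx_nonneg x -> x != 0 -> 0 < r ->
  mx_ge (x *m G) (r *: x) -> r <= spectral_radius G.
Proof.
move=> G0 x0 xn0 r0 xG; rewrite leNgt; apply/negP => rho_lt.
pose G' := r^-1 *: G.
have G'0 : mx_nonneg G' by move=> i j; rewrite /G' mxE mulr_ge0 // invr_ge0 ltW.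
have xG' : mx_ge (x *m G') x.
  by move=> i j; rewrite /G' -scalemxAr mxE ler_pdivlMl //; move: (xG i j); rewrite mxE.
have G'_eig mu : eigenvalue (mxC G') mu -> normc mu < 1.
  case/eigenvalueP => v vG' vn0.
  have eigG : eigenvalue (mxC G) (real_complex R r * mu).
    apply/eigenvalueP; exists v => //; rewrite -scalerA -vG' scalemxAr /G'.
    congr (_ *m _); apply/matrixP => a b.
    by rewrite !mxE -rmorphM /= mulrA mulfV ?gt_eqF // mul1r.
  have := normc_le_spectral_radius eigG; rewrite normcM normc_real gtr0_norm //.
  by move=> /le_lt_trans /(_ rho_lt); rewrite -ltr_pdivlMl // mulVf ?gt_eqF.
have [j xj] := mx_nonneg_row_gt0 x0 xn0.
have [N orbitN] := orbit_vanishing_eigen (mxC x) G'_eig j (divr_gt0 xj (ltr0Sn _ 1)).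
have := orbitN N (leqnn N); rewrite -map_mx_mul_exp mxE normc_real.
rewrite ger0_norm ?(mx_nonneg_mul x0 (mx_nonneg_exp _ G'0)) //.
move=> /(le_trans (subinvariant_mul_exp N G'0 xG' 0 j)).
by rewrite leNgt ltr_pdivrMr // ltr_pMr // ltr1n.
Qed.

Lemma spectral_radius_mono n (H1 H2 : 'M[R]_n) :
  mx_nonneg H1 -> mx_ge H2 H1 -> spectral_radius H1 <= spectral_radius H2.
Proof.
move=> H1_0 H12; rewrite leNgt; apply/negP => rho_lt.
have [l /eigenvalueP[w wH1 wn0] l_gt] :=
  spectral_radius_gt (spectral_radius_ge0 H2) rho_lt.
have H2_0 : mx_nonneg H2 by move=> i j; exact: le_trans (H1_0 i j) (H12 i j).
have xH2 : mx_ge (row_normc w *m H2) (normc l *: row_normc w).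
  move=> i j; apply: le_trans (mx_ge_row_normc_eigen H1_0 wH1 i j) _.
  exact: mx_ge_mull (row_normc_nonneg w) H12 i j.
have xn0 : row_normc w != 0 by apply: contra wn0 => /eqP/row_normc_eq0 ->.
have l_gt0 : 0 < normc l := le_lt_trans (spectral_radius_ge0 H2) l_gt.
have := spectral_radius_ge_subeigen H2_0 (row_normc_nonneg w) xn0 l_gt0 xH2.
by rewrite leNgt l_gt.
Qed.

Lemma spectral_radius_lt1 n m (H : 'M[R]_n) (B M : 'M[R]_(n, m)) :
  mx_nonneg H -> mx_nonneg B -> mx_nonneg M -> H *m B = B - M ->
  (forall x : 'rV_n, mx_nonneg x -> x *m M = 0 -> x = 0) -> spectral_radius H < 1.
Proof.
move=> H0 B0 M0 HB M_ker.
apply: spectral_radius_lt => [|l /eigenvalueP[w wH wn0]]; first exact: ltr01.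
rewrite ltNge; apply/negP => l_ge1.
suff /row_normc_eq0 /eqP : row_normc w = 0 by rewrite (negPf wn0).
apply: M_ker; first exact: row_normc_nonneg.
apply: (subinvariant_mulmx_eq0 H0 B0 M0 HB (row_normc_nonneg w)) => i j.
apply: le_trans (mx_ge_row_normc_eigen H0 wH i j).
by rewrite (ord1 i) !mxE ler_peMl ?normc_ge0.
Qed.

End NonnegativeSpectralRadius.

Section MoorePenrose.
Variable R : realType.

Lemma eq_mulmx_cV m n (B D : 'M[R]_(m, n)) :
  (forall x : 'cV_n, B *m x = D *m x) -> B = D.
Proof.
move=> BD; apply/matrixP => i j.
by have /colP/(_ i) := BD (delta_mx j 0); rewrite -!colE !mxE.
Qed.

Lemma mulmx_range_id m n p (P : 'M[R]_m) (A : 'M_(m, n)) (B : 'M_(m, p)) :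
  P *m A = A -> mx_range B `<=` mx_range A -> P *m B = B.
Proof.
move=> PA BA; apply: eq_mulmx_cV => x; rewrite -mulmxA.
have [y ->] : mx_range A (B *m x) by apply: BA; exists x.
by rewrite mulmxA PA.
Qed.

Lemma MP_mulmx_tr m n (A : 'M[R]_(m, n)) Ad :
  is_MP_inverse A Ad -> Ad *m A *m A^T = A^T.
Proof. by case=> AAdA _ _ AdA_sym; rewrite -{1}AdA_sym -trmx_mul mulmxA AAdA. Qed.

Lemma MP_mulVmx_range m n p (A : 'M[R]_(m, n)) Ad (E : 'I_p -> 'M[R]_n) :
  is_MP_inverse A Ad -> \sum_k E k = 1%:M ->
  (forall k, mx_range (E k) `<=` mx_range A^T) -> Ad *m A = 1%:M.
Proof.
move=> MP sumE rangeE; rewrite -[Ad *m A]mulmx1 -sumE mulmx_sumr.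
by apply: eq_bigr => k _; apply: mulmx_range_id (MP_mulmx_tr MP) (rangeE k).
Qed.

Lemma MP_mulVmx_ker m n (U : 'M[R]_(m, n)) Ud :
  is_MP_inverse U Ud -> (forall z : 'cV_n, U *m z = 0 -> z = 0) -> Ud *m U = 1%:M.
Proof.
case=> UUdU _ _ _ kerU; apply: eq_mulmx_cV => z; rewrite mul1mx.
apply/eqP; rewrite -subr_eq0; apply/eqP/kerU.
by rewrite mulmxBr !mulmxA UUdU subrr.
Qed.

Lemma MP_mulmx_proj m n (U : 'M[R]_(m, n)) Ud (P : 'M[R]_m) :
  is_MP_inverse U Ud -> P^T = P -> P *m U = U -> Ud *m P = Ud.
Proof.
case=> _ UdUUd UUd_sym _ P_sym PU.
have UtP : U^T *m P = U^T by rewrite -{1}P_sym -trmx_mul PU.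
have UdE : Ud = Ud *m Ud^T *m U^T by rewrite -mulmxA -trmx_mul UUd_sym mulmxA UdUUd.
by rewrite UdE -mulmxA UtP.
Qed.

End MoorePenrose.

Section Multisplittings.
Variable R : realType.
Variables (m n p : nat) (A : 'M[R]_(m, n)) (Ad : 'M[R]_(n, m)).

Lemma proper_weak_regular_mulVmx (U V : 'M[R]_(m, n)) Ud :
  Ad *m A = 1%:M -> proper_weak_regular A U V Ud -> Ud *m U = 1%:M.
Proof.
move=> AdA [[_ _ nullU] MP _ _]; apply: MP_mulVmx_ker MP _ => z Uz.
have Az : A *m z = 0 by have : mx_null U z := Uz; rewrite nullU.
by rewrite -[z]mul1mx -AdA -mulmxA Az mulmx0.
Qed.

Lemma proper_weak_regular_proj (U V : 'M[R]_(m, n)) Ud :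
  is_MP_inverse A Ad -> proper_weak_regular A U V Ud -> Ud *m (A *m Ad) = Ud.
Proof.
move=> [AAdA _ AAd_sym _] [[_ rangeU _] MP _ _].
apply: MP_mulmx_proj MP AAd_sym _.
by apply: (mulmx_range_id AAdA); rewrite rangeU.
Qed.

Variables (U V : 'I_p -> 'M[R]_(m, n)) (Ud : 'I_p -> 'M[R]_(n, m)) (E : 'I_p -> 'M[R]_n).
Hypothesis splitting : pwr_multisplitting A U V Ud E.

Lemma multisplit_iter_nonneg : mx_nonneg (multisplit_iter U V Ud E).
Proof.
have [pwr E_diag _] := splitting.
apply: mx_nonneg_sum => k; apply: mx_nonneg_mul; first by case: (E_diag k).
by case: (pwr k).
Qed.

Lemma multisplit_iterE : Ad *m A = 1%:M ->
  multisplit_iter U V Ud E = 1%:M - (\sum_k E k *m Ud k) *m A.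
Proof.
move=> AdA; have [pwr _ sumE] := splitting.
rewrite /multisplit_iter -sumE mulmx_suml -sumrB; apply: eq_bigr => k _.
have [[AUV _ _] _ _ _] := pwr k.
have -> : V k = U k - A by rewrite AUV opprB addrC subrK.
by rewrite !mulmxBr (proper_weak_regular_mulVmx AdA (pwr k)) mulmx1 mulmxA.
Qed.

Lemma multisplit_iter_mulmx_pinv : is_MP_inverse A Ad -> Ad *m A = 1%:M ->
  multisplit_iter U V Ud E *m Ad = Ad - \sum_k E k *m Ud k.
Proof.
move=> MP AdA; have [pwr _ _] := splitting.
rewrite multisplit_iterE // mulmxBl mul1mx -mulmxA mulmx_suml.
congr (_ - _); apply: eq_bigr => k _.
by rewrite -mulmxA (proper_weak_regular_proj MP (pwr k)).
Qed.

End Multisplittings.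

Theorem theorem5p13 (R : realType) (m n p : nat)
  (A : 'M[R]_(m, n)) (Ad : 'M[R]_(n, m))
  (U1 V1 U2 V2 : 'I_p -> 'M[R]_(m, n)) (U1d U2d : 'I_p -> 'M[R]_(n, m))
  (E : 'I_p -> 'M[R]_n) :
  mx_nonneg A -> is_MP_inverse A Ad -> mx_nonneg Ad ->
  pwr_multisplitting A U1 V1 U1d E ->
  pwr_multisplitting A U2 V2 U2d E ->
  (forall k, mx_range (E k) `<=` mx_range A^T) ->
  (forall k, mx_ge (U1d k) (U2d k)) ->
  spectral_radius (multisplit_iter U1 V1 U1d E)
    <= spectral_radius (multisplit_iter U2 V2 U2d E)
  /\ spectral_radius (multisplit_iter U2 V2 U2d E) < 1.
Proof.
move=> A0 MP Ad0 split1 split2 rangeE U1d_ge.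
have [pwr2 E_diag sumE] := split2.
have E0 k : mx_nonneg (E k) by case: (E_diag k).
have U2d0 k : mx_nonneg (U2d k) by case: (pwr2 k).
have AdA := MP_mulVmx_range MP sumE rangeE.
split.
  apply: spectral_radius_mono (multisplit_iter_nonneg split1) _.
  rewrite (multisplit_iterE split1 AdA) (multisplit_iterE split2 AdA).
  apply/mx_ge_subr/mx_ge_mulr => //; apply: mx_ge_sum => k.
  exact: mx_ge_mull (E0 k) (U1d_ge k).
apply: (spectral_radius_lt1 (multisplit_iter_nonneg split2) Ad0 _
          (multisplit_iter_mulmx_pinv split2 MP AdA)).
  by apply: mx_nonneg_sum => k; apply: mx_nonneg_mul.
move=> x; apply: mulmx_sum_nonneg_eq0 E0 U2d0 _ sumE => k.
exact: proper_weak_regular_mulVmx AdA (pwr2 k).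
Qed.
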